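(* For every integer $n \geq 1$, $n$ divides $D_n$.
   Context: A linear arrangement of $\{1,\ldots,n\}$ is a sequence $a_1\cdots a_n$ in which each of $1,\ldots,n$ appears exactly once. It contains the pattern $ij$ if $a_t=i$ and $a_{t+1}=j$ for some $t$; otherwise it avoids it. $D_n$ is the number of linear arrangements of $\{1,\ldots,n\}$ avoiding all of the patterns $12, 23, \ldots, (n-1)n, n1$. *)

From mathcomp Require Import all_boot.
Set Implicit Arguments. Unset Strict Implicit. Unset Printing Implicit Defensive.

Definition arrangement (n : nat) (s : seq nat) : bool := perm_eq s (iota 1 n).

Definition contains_pattern (s : seq nat) (i j : nat) : bool :=
  has (fun t => (nth 0 s t == i) && (nth 0 s t.+1 == j)) (iota 0 (size s).-1).

Definition avoids_cyclic (n : nat) (s : seq nat) : bool :=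
  all (fun k => ~~ contains_pattern s k k.+1) (iota 1 n.-1)
  && ~~ contains_pattern s n 1.

Definition D (n : nat) : nat :=
  count (fun s => arrangement n s && avoids_cyclic n s) (permutations (iota 1 n)).
(* permutations (iota 1 n) is a duplicate-free list of exactly the arrangements
   (mem_permutations, permutations_uniq), so D n is their number. *)

From mathcomp Require Import all_boot.
From mathcomp Require Import zify.

(* The cyclic shift k |-> k + 1 (mod n) of the values is a bijection on the
   arrangements of {1, ..., n}; it maps the set of forbidden patterns
   {(k, k + 1 mod n)} onto itself, hence preserves avoidance, and it sends
   arrangements starting with k to arrangements starting with k + 1 (mod n).
   So every first entry occurs equally often among the avoiding arrangements,
   and D_n is n times the number of those starting with 1. *)

Lemma perm_map_closed (T : eqType) (g : T -> T) (s : seq T) :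
  injective g -> uniq s -> {in s, forall x, g x \in s} -> perm_eq (map g s) s.
Proof.
move=> g_inj s_uniq gs; have gs_uniq : uniq (map g s) by rewrite map_inj_uniq.
apply: uniq_perm => //; apply: (uniq_min_size gs_uniq _ _).2.
- by move=> _ /mapP[x xs ->]; exact: gs.
- by rewrite size_map.
Qed.

Lemma nth_map_fixed (T : Type) (x0 : T) (f : T -> T) (s : seq T) (i : nat) :
  f x0 = x0 -> nth x0 (map f s) i = f (nth x0 s i).
Proof.
move=> fx0; case: (ltnP i (size s)) => [lt_is | le_si]; first exact: nth_map.
by rewrite !nth_default ?size_map.
Qed.

Lemma count_partition (T : Type) (I : eqType) (P : pred T) (h : T -> I)
    (r : seq I) (s : seq T) :
  uniq r -> (forall x, P x -> h x \in r) ->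
  count P s = \sum_(i <- r) count (fun x => P x && (h x == i)) s.
Proof.
move=> r_uniq hP; elim: s => [|x s IHs] /=; first by rewrite big1.
rewrite big_split /= -IHs; congr (_ + _).
case Px: (P x) => /=; last by rewrite big1.
transitivity (count_mem (h x) r); first by rewrite count_uniq_mem ?hP.
rewrite -sum1_count big_mkcond; apply: eq_bigr => i _.
by rewrite /= eq_sym; case: eqP.
Qed.

(* The n-cycle (1 2 ... n), extended by the identity elsewhere so that it is
   injective on nat and fixes 0, the default value of nth and head. *)
Definition cyc_succ (n x : nat) : nat :=
  if x == 0 then 0 else if x < n then x.+1 else if x == n then 1 else x.

Lemma cyc_succ_inj n : injective (cyc_succ n).
Proof. by move=> x y; rewrite /cyc_succ; repeat case: ifP; lia. Qed.

Lemma cyc_succ_lt n k : 0 < k < n -> cyc_succ n k = k.+1.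
Proof. by rewrite /cyc_succ; repeat case: ifP; lia. Qed.

Lemma cyc_succ_id n : 0 < n -> cyc_succ n n = 1.
Proof. by rewrite /cyc_succ; repeat case: ifP; lia. Qed.

Lemma perm_map_cyc_succ_iota n : perm_eq (map (cyc_succ n) (iota 1 n)) (iota 1 n).
Proof.
apply: perm_map_closed; [exact: cyc_succ_inj | exact: iota_uniq |].
by move=> x; rewrite !mem_iota /cyc_succ; repeat case: ifP; lia.
Qed.

Lemma contains_pattern_map (f : nat -> nat) (s : seq nat) (i j : nat) :
  injective f -> f 0 = 0 ->
  contains_pattern (map f s) (f i) (f j) = contains_pattern s i j.
Proof.
move=> f_inj f0; rewrite /contains_pattern size_map; apply: eq_has => t.
by rewrite !nth_map_fixed // !(inj_eq f_inj).
Qed.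

Lemma avoids_cyclicE n s : 0 < n ->
  avoids_cyclic n s =
  all (fun k => ~~ contains_pattern s k (cyc_succ n k)) (iota 1 n).
Proof.
case: n => // m _; rewrite /avoids_cyclic -[m.+1]addn1 iotaD all_cat /= andbT.
rewrite add1n addn1 cyc_succ_id //; congr (_ && _).
apply: eq_in_all => k; rewrite mem_iota => k_range.
by rewrite cyc_succ_lt //; lia.
Qed.

Lemma avoids_cyclic_map n s : 0 < n ->
  avoids_cyclic n (map (cyc_succ n) s) = avoids_cyclic n s.
Proof.
move=> n_gt0; rewrite !avoids_cyclicE //.
rewrite -(perm_all _ (perm_map_cyc_succ_iota n)) all_map.
by apply: eq_all => k /=; rewrite contains_pattern_map //; exact: cyc_succ_inj.
Qed.

Lemma arrangement_map n s :
  arrangement n s -> arrangement n (map (cyc_succ n) s).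
Proof.
move=> s_arr; apply: perm_trans (perm_map _ s_arr) _.
exact: perm_map_cyc_succ_iota.
Qed.

Lemma arrangement_head n s : 0 < n -> arrangement n s -> head 0 s \in iota 1 n.
Proof.
case: s => [|x s] n_gt0 s_arr; last by rewrite -(perm_mem s_arr) mem_head.
by move: (perm_size s_arr); rewrite size_iota /=; lia.
Qed.

Lemma perm_map_cyc_succ_arrangements n :
  perm_eq (map (map (cyc_succ n)) (permutations (iota 1 n)))
          (permutations (iota 1 n)).
Proof.
apply: perm_map_closed; [exact/inj_map/cyc_succ_inj | exact: permutations_uniq |].
by move=> s; rewrite !mem_permutations; exact: arrangement_map.
Qed.

Definition D_start (n k : nat) : nat :=
  count (fun s => arrangement n s && avoids_cyclic n s && (head 0 s == k))
    (permutations (iota 1 n)).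

Lemma D_start_cyc_succ n k : 0 < n -> D_start n (cyc_succ n k) = D_start n k.
Proof.
move=> n_gt0; rewrite /D_start -(permP (perm_map_cyc_succ_arrangements n)).
rewrite count_map; apply: eq_in_count => s; rewrite mem_permutations => s_arr /=.
have -> : head 0 (map (cyc_succ n) s) = cyc_succ n (head 0 s) by case: s {s_arr}.
rewrite arrangement_map // avoids_cyclic_map // (inj_eq (cyc_succ_inj n)).
by rewrite /arrangement s_arr.
Qed.

Lemma D_start_const n k : 0 < k <= n -> D_start n k = D_start n 1.
Proof.
elim: k => [|[|k] IHk] k_range //.
by rewrite -(@cyc_succ_lt n) ?D_start_cyc_succ ?IHk //; lia.
Qed.

Lemma D_sum n : 0 < n -> D n = \sum_(k <- iota 1 n) D_start n k.
Proof.
move=> n_gt0; apply: count_partition; first exact: iota_uniq.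
by move=> s /andP[s_arr _]; exact: arrangement_head.
Qed.

Theorem corollary3p4 (n : nat) : 1 <= n -> n %| D n.
Proof.
move=> n_gt0; rewrite D_sum // (eq_big_seq (fun=> D_start n 1)); last first.
  by move=> k; rewrite mem_iota => k_range; apply: D_start_const; lia.
by rewrite big_const_seq count_predT size_iota iter_addn_0 dvdn_mull.
Qed.
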